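(* Let $n,r$ be positive integers with $r^2\le n+r$. Then $k(n+r)\le k(n)+1$.
   Context: A system on $n$ elements is a triple $(\mathcal{F},w,s)$ where $\mathcal{F}=(F_1,\dots,F_m)$ is a collection of subsets of $[n]$, $w\in[0,1]^m$ with $\sum_i w_i=1$, and $s\in[0,1]^{m\times m\times n}$ with $\sum_p s_{ijp}=1$ for all $i,j$. It is intersecting if $s_{ijp}>0$ implies $p\in F_i\cap F_j$. It is balanced if for all $p\in[n]$, $\sum_{i,j} w_iw_js_{ijp}=1/n$. Its cardinality is the size of the largest set in $\mathcal{F}$. $k(n)$ is the minimum $k$ such that there exists a balanced intersecting system on $n$ elements with cardinality $k$. *)

From HB Require Import structures.
From mathcomp Require Import all_boot all_order all_algebra.
From mathcomp Require Import boolp Rstruct.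
Set Implicit Arguments. Unset Strict Implicit. Unset Printing Implicit Defensive.
Import Order.TTheory GRing.Theory Num.Theory.
Local Open Scope ring_scope.

Notation R := Rdefinitions.R.

Record system (n : nat) := System {
  sys_m : nat;
  sys_F : 'I_sys_m -> {set 'I_n};
  sys_w : 'I_sys_m -> R;
  sys_s : 'I_sys_m -> 'I_sys_m -> 'I_n -> R;
}.
Arguments sys_m {n} s.
Arguments sys_F {n} s i.
Arguments sys_w {n} s i.
Arguments sys_s {n} s i j p.

Definition is_system n (S : system n) : Prop :=
  (forall i, 0 <= sys_w S i <= 1) /\ (\sum_i sys_w S i = 1) /\
  (forall i j p, 0 <= sys_s S i j p <= 1) /\
  (forall i j, \sum_p sys_s S i j p = 1).

Definition intersecting n (S : system n) : Prop :=
  forall i j p, 0 < sys_s S i j p -> p \in sys_F S i :&: sys_F S j.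

Definition balanced n (S : system n) : Prop :=
  forall p : 'I_n,
    \sum_i \sum_j sys_w S i * sys_w S j * sys_s S i j p = (n%:R)^-1.

Definition cardinality n (S : system n) : nat := (\max_i #|sys_F S i|)%N.

Definition has_bis (n k : nat) : bool :=
  `[< exists S : system n, [/\ is_system S, intersecting S, balanced S
                             & cardinality S = k] >].

(* k(n) = least k admitting a balanced intersecting system on n elements
   with cardinality k (0 if none exists, which only happens for n = 0). *)
Definition kfun (n : nat) : nat :=
  match pselect (exists k, has_bis n k) with
  | left h => ex_minn h
  | right _ => 0%N
  end.

From mathcomp Require Import all_boot all_order all_algebra.
From mathcomp Require Import boolp Rstruct ring lra.
Set Implicit Arguments. Unset Strict Implicit. Unset Printing Implicit Defensive.
Import Order.TTheory GRing.Theory Num.Theory.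

Local Open Scope ring_scope.

(* Start from a balanced intersecting system (F, w, s) on [n] of cardinality
   k(n) and add r new points n+1, ..., n+r.  Each F_i is replaced by the r sets
   F_i + {n+t} (t < r) of weight w_i / r.  For two such sets with labels t and
   u, the old distribution s_ij is scaled by 1 - a[t = u] and the remaining
   mass a[t = u] goes to the common new point n+t, where a = r^2 / (n + r).
   An old point then receives (1/n) (r^2 - r a) / r^2 = 1/(n+r) and a new point
   a / r^2 = 1/(n+r); the hypothesis r^2 <= n + r says exactly that a <= 1.
   Every set grew by one point. *)

Lemma kfun_le N k : has_bis N k -> (kfun N <= k)%N.
Proof. by rewrite /kfun; case: pselect => // h; case: ex_minnP => m _; apply. Qed.

Lemma has_bis_kfun N : (exists k, has_bis N k) -> has_bis N (kfun N).
Proof. by rewrite /kfun; case: pselect => // h _; case: ex_minnP. Qed.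

Section FinSystem.
Variables (n : nat) (T : finType).
Variables (F : T -> {set 'I_n}) (w : T -> R) (s : T -> T -> 'I_n -> R).

Definition fin_system : system n :=
  @System n #|T| (fun k => F (enum_val k)) (fun k => w (enum_val k))
    (fun k l => s (enum_val k) (enum_val l)).

Lemma fin_system_is_system :
    (forall x, 0 <= w x <= 1) -> \sum_x w x = 1 ->
    (forall x y p, 0 <= s x y p <= 1) -> (forall x y, \sum_p s x y p = 1) ->
  is_system fin_system.
Proof. by move=> w01 w1 s01 s1; do !split => /=; rewrite -?big_enum_val. Qed.

Lemma fin_system_intersecting :
  (forall x y p, 0 < s x y p -> p \in F x :&: F y) -> intersecting fin_system.
Proof. by move=> Fs k l p /Fs. Qed.

Lemma fin_system_balanced :
    (forall p, \sum_x \sum_y w x * w y * s x y p = n%:R^-1) ->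
  balanced fin_system.
Proof.
move=> ws p; rewrite -(ws p) [RHS]big_enum_val; apply: eq_bigr => k _.
by rewrite /= [RHS]big_enum_val.
Qed.

Lemma cardinality_fin_system : cardinality fin_system = (\max_x #|F x|)%N.
Proof. by rewrite /cardinality [RHS]big_enum_val. Qed.

End FinSystem.

Lemma has_bis_uniform n : (0 < n)%N -> has_bis n n.
Proof.
move=> n_gt0; apply/asboolP.
exists (fin_system (fun _ : 'I_1 => setT) (fun _ => 1) (fun _ _ _ => n%:R^-1)).
have n_neq0 : n%:R != 0 :> R by rewrite pnatr_eq0 -lt0n.
split.
- apply: fin_system_is_system => [_|||_ _]; rewrite ?big_ord1 ?lexx ?ler01 //.
    by move=> _ _ _; rewrite invr_ge0 ler0n invf_le1 ?ler1n ?ltr0n.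
  by rewrite sumr_const card_ord -[_ *+ n]mulr_natr mulVf.
- by apply: fin_system_intersecting => _ _ p _; rewrite !inE.
- by apply: fin_system_balanced => p; rewrite !big_ord1 !mul1r.
- by rewrite cardinality_fin_system big_ord1 cardsT card_ord.
Qed.

Lemma sumr_mulrb_eq (V : nmodType) (I : finType) (F : I -> V) (v : I) :
  \sum_u F u *+ (u == v) = F v.
Proof. by rewrite (bigD1 v) //= eqxx big1 ?addr0 // => u /negbTE ->. Qed.

Lemma sum_pair_mul (Rg : comPzSemiRingType) (I J : finType)
    (A : I -> I -> Rg) (B : J -> J -> Rg) :
  \sum_(x : I * J) \sum_(y : I * J) A x.1 y.1 * B x.2 y.2 =
  (\sum_i \sum_j A i j) * (\sum_t \sum_u B t u).
Proof.
rewrite big_distrlr -(pair_bigA _ (fun i t => \sum_(y : I * J) A i y.1 * B t y.2)).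
apply: eq_bigr => i _; apply: eq_bigr => t _.
by rewrite big_distrlr -(pair_bigA _ (fun j u => A i j * B t u)).
Qed.

Lemma split_lshift m k (q : 'I_m) : split (lshift k q) = inl q.
Proof. exact: (unsplitK (inl q)). Qed.

Lemma split_rshift m k (v : 'I_k) : split (rshift m v) = inr v.
Proof. exact: (unsplitK (inr v)). Qed.

Section Extension.
Variables (n r : nat) (S : system n).
Hypotheses (n_gt0 : (0 < n)%N) (r_gt0 : (0 < r)%N) (r2_le : (r ^ 2 <= n + r)%N).
Hypothesis S_sys : is_system S.
Local Notation T := ('I_(sys_m S) * 'I_r)%type.

Let r_neq0 : r%:R != 0 :> R.
Proof. by rewrite pnatr_eq0 -lt0n. Qed.

Let n_neq0 : n%:R != 0 :> R.
Proof. by rewrite pnatr_eq0 -lt0n. Qed.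

Let nr_neq0 : n%:R + r%:R != 0 :> R.
Proof. by rewrite -natrD pnatr_eq0 addn_eq0 negb_and -lt0n n_gt0. Qed.

Definition ext_alpha : R := (r ^ 2)%:R / (n + r)%:R.

Lemma ext_alpha_ge0 : 0 <= ext_alpha.
Proof. by rewrite divr_ge0 ?ler0n. Qed.

Lemma ext_alpha_le1 : ext_alpha <= 1.
Proof. by rewrite ler_pdivrMr ?mul1r ?ler_nat // ltr0n addn_gt0 n_gt0. Qed.

Definition ext_F (x : T) : {set 'I_(n + r)} :=
  rshift n x.2 |: (lshift r @: sys_F S x.1).

Definition ext_w (x : T) : R := sys_w S x.1 / r%:R.

Definition ext_s (x y : T) (p : 'I_(n + r)) : R :=
  match split p with
  | inl q => (1 - ext_alpha *+ (x.2 == y.2)) * sys_s S x.1 y.1 q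
  | inr v => ext_alpha *+ (x.2 == y.2) *+ (y.2 == v)
  end.

Definition ext_system : system (n + r) := fin_system ext_F ext_w ext_s.

Lemma ext_s_lshift x y q :
  ext_s x y (lshift r q) = (1 - ext_alpha *+ (x.2 == y.2)) * sys_s S x.1 y.1 q.
Proof. by rewrite /ext_s split_lshift. Qed.

Lemma ext_s_rshift x y v :
  ext_s x y (rshift n v) = ext_alpha *+ (x.2 == y.2) *+ (y.2 == v).
Proof. by rewrite /ext_s split_rshift. Qed.

Lemma ext_alpha_mulrb_bounds (b : bool) :
  (0 <= ext_alpha *+ b <= 1) && (0 <= 1 - ext_alpha *+ b <= 1).
Proof.
have a0 := ext_alpha_ge0; have a1 := ext_alpha_le1.
by case: b; rewrite ?mulr1n ?mulr0n; do !(apply/andP; split); lra.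
Qed.

Lemma ext_s_bounds x y p : 0 <= ext_s x y p <= 1.
Proof.
have [_ [_ [s01 _]]] := S_sys.
rewrite /ext_s; case: (split p) => [q|v].
- have /andP [_ /andP [c0 c1]] := ext_alpha_mulrb_bounds (x.2 == y.2).
  have /andP [s0 s1] := s01 x.1 y.1 q.
  by rewrite mulr_ge0 ?mulr_ile1.
- rewrite -mulrnA mulnb.
  by case/andP: (ext_alpha_mulrb_bounds ((x.2 == y.2) && (y.2 == v))).
Qed.

Lemma sum_ext_s x y : \sum_p ext_s x y p = 1.
Proof.
have [_ [_ [_ s1]]] := S_sys.
rewrite big_split_ord (eq_bigr _ (fun q _ => ext_s_lshift x y q)) -mulr_sumr s1.
under eq_bigr do rewrite ext_s_rshift (eq_sym y.2).
by rewrite mulr1 sumr_mulrb_eq /= subrK.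
Qed.

Lemma ext_w_bounds x : 0 <= ext_w x <= 1.
Proof.
have [w01 _] := S_sys; have /andP [w0 w1] := w01 x.1.
rewrite divr_ge0 ?ler0n //= ler_pdivrMr ?ltr0n // mul1r.
by rewrite (le_trans w1) ?ler1n.
Qed.

Lemma sum_ext_w : \sum_x ext_w x = 1.
Proof.
have [_ [w1 _]] := S_sys.
rewrite -(pair_bigA _ (fun i (t : 'I_r) => sys_w S i / r%:R)) -[RHS]w1 /=.
apply: eq_bigr => i _; rewrite sumr_const card_ord -[_ *+ r]mulr_natr.
by rewrite divfK.
Qed.

Lemma ext_s_gt0_mem x y p :
  intersecting S -> 0 < ext_s x y p -> p \in ext_F x :&: ext_F y.
Proof.
have [_ [_ [s01 _]]] := S_sys.
move=> S_int; rewrite /ext_F -(splitK p); case: (split p) => [q|v] /=.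
- rewrite ext_s_lshift => ext_s_gt0.
  have s_gt0 : 0 < sys_s S x.1 y.1 q.
    rewrite lt_def; have /andP [-> _] := s01 x.1 y.1 q.
    by rewrite andbT; apply: contraTneq ext_s_gt0 => ->; rewrite mulr0 ltxx.
  have /setIP [qx qy] := S_int _ _ _ s_gt0.
  by rewrite !inE !imset_f ?orbT.
- rewrite ext_s_rshift -mulrnA mulnb mulrb.
  case: ifP => [/andP [/eqP -> /eqP ->] _|_]; last by rewrite ltxx.
  by rewrite !inE eqxx.
Qed.

Lemma sum_ext_diag_factor :
  \sum_(t < r) \sum_(u < r) (1 - ext_alpha *+ (t == u)) = r%:R * (r%:R - ext_alpha).
Proof.
under eq_bigr => t _.
  rewrite sumrB sumr_const card_ord.
  under eq_bigr => u _ do rewrite eq_sym.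
  rewrite sumr_mulrb_eq.
  over.
by rewrite sumr_const card_ord mulr_natl.
Qed.

Lemma ext_balanced_lshift q : balanced S ->
  \sum_x \sum_y ext_w x * ext_w y * ext_s x y (lshift r q) = (n + r)%:R^-1.
Proof.
move=> S_bal; transitivity ((\sum_i \sum_j sys_w S i * sys_w S j * sys_s S i j q) *
              \sum_(t < r) \sum_(u < r) (1 - ext_alpha *+ (t == u)) / r%:R ^+ 2).
  rewrite -sum_pair_mul; apply: eq_bigr => x _; apply: eq_bigr => y _.
  by rewrite ext_s_lshift /ext_w; field.
rewrite S_bal.
under eq_bigr do rewrite -mulr_suml.
rewrite -mulr_suml sum_ext_diag_factor /ext_alpha natrD natrX.
by field; rewrite nr_neq0 n_neq0 r_neq0.
Qed.

Lemma ext_balanced_rshift v :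
  \sum_x \sum_y ext_w x * ext_w y * ext_s x y (rshift n v) = (n + r)%:R^-1.
Proof.
have [_ [w1 _]] := S_sys.
transitivity ((\sum_i \sum_j sys_w S i * sys_w S j) *
              \sum_(t < r) \sum_(u < r) ext_alpha *+ (t == u) *+ (u == v) / r%:R ^+ 2).
  rewrite -sum_pair_mul; apply: eq_bigr => x _; apply: eq_bigr => y _.
  by rewrite ext_s_rshift /ext_w; field.
rewrite -big_distrlr /= w1 mul1r.
under eq_bigr do rewrite -mulr_suml sumr_mulrb_eq.
rewrite -mulr_suml sumr_mulrb_eq /ext_alpha natrD natrX.
by field; rewrite nr_neq0 r_neq0.
Qed.

Lemma cardinality_ext_system_le : (cardinality ext_system <= cardinality S + 1)%N.
Proof.
rewrite cardinality_fin_system; apply/bigmax_leqP => x _.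
rewrite cardsU1 addnC leq_add ?leq_b1 //.
exact: leq_trans (leq_imset_card _ _) (leq_bigmax _).
Qed.

Lemma has_bis_ext_system :
  intersecting S -> balanced S -> has_bis (n + r) (cardinality ext_system).
Proof.
move=> S_int S_bal; apply/asboolP; exists ext_system; split => //.
- exact: fin_system_is_system ext_w_bounds sum_ext_w ext_s_bounds sum_ext_s.
- by apply: fin_system_intersecting => x y p; apply: ext_s_gt0_mem.
- apply: fin_system_balanced => p; rewrite -(splitK p).
  by case: (split p) => [q|v]; [apply: ext_balanced_lshift | apply: ext_balanced_rshift].
Qed.

End Extension.

Theorem lemma3 (n r : nat) : (0 < n)%N -> (0 < r)%N -> (r ^ 2 <= n + r)%N ->
  (kfun (n + r) <= kfun n + 1)%N.
Proof.
move=> n_gt0 r_gt0 r2_le.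
have /asboolP [S [S_sys S_int S_bal <-]] := has_bis_kfun (ex_intro _ n (has_bis_uniform n_gt0)).
apply: leq_trans (kfun_le (has_bis_ext_system n_gt0 r_gt0 r2_le S_sys S_int S_bal)) _.
exact: cardinality_ext_system_le.
Qed.
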